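(* Consider the Maxwell--Bloch system \[ \dot A=B,\quad \dot B=-\Omega^2A-\sigma B+cj(t),\quad i\hbar\dot C_1=\hbar\omega_1C_1+ia(t)C_2,\quad i\hbar\dot C_2=\hbar\omega_2C_2-ia(t)C_1,\qquad t>0, \] with $j(t)=2q\,\mathrm{Im}[\overline{C_1(t)}C_2(t)]$, $a(t)=\frac qc[A(t)+A_p(t)]$, where $A_p\in C[0,\infty)$ is real-valued. Then there exist a quadratic function $V(A,B)$ on $\mathbb R^2$ and constants $a_1,a_2>0$ such that \[ a_1[A^2+B^2]\le V(A,B)\le a_2[A^2+B^2]\quad\text{for all }(A,B)\in\mathbb R^2, \] and constants $\gamma,D>0$ such that for every solution $(A(t),B(t),C_1(t),C_2(t))$ of the system with $|C_1(t)|^2+|C_2(t)|^2=1$, \[ \frac{d}{dt}V(A(t),B(t))\le-\gamma V(A(t),B(t))+D,\qquad t>0. \]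
   Context: Parameters: $\Omega>0$ (resonance frequency), $\sigma>0$ (dissipation), $c>0$, $\hbar>0$, real $\omega_2>\omega_1$, $p>0$, $\omega=\omega_2-\omega_1$, $q=\omega p$. Unknowns: $A(t),B(t)\in\mathbb R$, $C_1(t),C_2(t)\in\mathbb C$. The function $A_p$ (the pumping) is given. *)

From Stdlib Require Import Reals.
From Coquelicot Require Import Coquelicot.
Open Scope R_scope.

Definition cont_on_nonneg (f : R -> R) : Prop :=
  forall t, 0 <= t ->
    filterlim f (within (fun s => 0 <= s) (locally t)) (locally (f t)).

Definition qconst (w1 w2 p : R) : R := (w2 - w1) * p.

Definition jcur (q : R) (z1 z2 : C) : R := 2 * q * Im (Cconj z1 * z2).

Definition MB_solution (Omega sigma c hbar w1 w2 p : R) (Ap : R -> R)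
    (A B : R -> R) (C1 C2 : R -> C) : Prop :=
  let q := qconst w1 w2 p in
  forall t, 0 < t ->
    let a := q / c * (A t + Ap t) in
    is_derive A t (B t) /\
    is_derive B t (- Omega ^ 2 * A t - sigma * B t + c * jcur q (C1 t) (C2 t)) /\
    exists dC1 dC2 : C,
      is_derive C1 t dC1 /\ is_derive C2 t dC2 /\
      (Ci * hbar * dC1 = hbar * w1 * C1 t + Ci * a * C2 t)%C /\
      (Ci * hbar * dC2 = hbar * w2 * C2 t - Ci * a * C1 t)%C.

Definition quadV (k1 k2 k3 : R) (x y : R) : R := k1 * x ^ 2 + k2 * x * y + k3 * y ^ 2.

(** The field (A, B) is a damped oscillator [A'' + σ A' + Ω² A = F] driven by
    the force [F = c j], and [|C1|² + |C2|² = 1] bounds [j² ≤ q²] since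
    [|Im (conj C1 C2)| ≤ |C1| |C2| ≤ 1/2].  For the standard tilted energy
    [V = (Ω² + εσ/2) A² + ε A B + B²] with small [ε > 0], the cross terms
    [A B] cancel in [dV/dt], leaving [-εΩ² A² - (2σ - ε) B² + F (ε A + 2 B)];
    Young's inequality absorbs the forcing into half of the dissipation, so
    [dV/dt ≤ -m (A² + B²) + K F² ≤ -γ V + D]. *)
From Stdlib Require Import Reals Lra Psatz.
From Coquelicot Require Import Coquelicot.
Open Scope R_scope.

Lemma Im_sqr_le_Cmod_sqr (z : C) : Im z ^ 2 <= Cmod z ^ 2.
Proof. rewrite Cmod2_alt; pose proof (pow2_ge_0 (Re z)); lra. Qed.

Lemma jcur_sqr_le (q : R) (z1 z2 : C) :
  Cmod z1 ^ 2 + Cmod z2 ^ 2 = 1 -> jcur q z1 z2 ^ 2 <= q ^ 2.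
Proof.
  intros Hnorm; unfold jcur.
  assert (HIm : Im (Cconj z1 * z2) ^ 2 <= Cmod z1 ^ 2 * Cmod z2 ^ 2).
  { rewrite <- Rpow_mult_distr, <- (Cmod_conj z1), <- Cmod_mult.
    apply Im_sqr_le_Cmod_sqr. }
  assert (Hamgm : Cmod z1 ^ 2 * Cmod z2 ^ 2 <= 1 / 4)
    by (pose proof (pow2_ge_0 (Cmod z1 ^ 2 - Cmod z2 ^ 2)); nra).
  rewrite !Rpow_mult_distr.
  pose proof (pow2_ge_0 q); nra.
Qed.

Lemma is_derive_quadV (k1 k2 k3 : R) (X Y : R -> R) (t dX dY : R) :
  is_derive X t dX -> is_derive Y t dY ->
  is_derive (fun s => quadV k1 k2 k3 (X s) (Y s)) t
    (2 * k1 * X t * dX + k2 * (dX * Y t + X t * dY) + 2 * k3 * Y t * dY).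
Proof.
  intros HX HY; unfold quadV.
  assert (EX : ex_derive X t) by (exists dX; exact HX).
  assert (EY : ex_derive Y t) by (exists dY; exact HY).
  rewrite <- (is_derive_unique _ _ _ HX), <- (is_derive_unique _ _ _ HY).
  auto_derive; auto.
  change (Derive (fun s => X s) t) with (Derive X t).
  change (Derive (fun s => Y s) t) with (Derive Y t).
  ring.
Qed.

Lemma Rmult_le_young (k a b : R) :
  0 < k -> a * b <= k / 2 * a ^ 2 + b ^ 2 / (2 * k).
Proof.
  intros Hk.
  assert (Hsq : 0 <= (k * a - b) ^ 2 / (2 * k))
    by (apply Rdiv_le_0_compat; [apply pow2_ge_0 | lra]).
  replace ((k * a - b) ^ 2 / (2 * k))
    with (k / 2 * a ^ 2 + b ^ 2 / (2 * k) - a * b) in Hsq by (field; lra).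
  lra.
Qed.

Section TiltedEnergy.

Variables Om2 sigma eps : R.
Hypotheses (HOm2 : 0 < Om2) (Hsigma : 0 < sigma) (Heps : 0 < eps)
  (Heps_sigma : eps <= sigma) (Heps_Om2 : eps <= Om2) (Heps1 : eps <= 1).

Local Notation V := (quadV (Om2 + eps * sigma / 2) eps 1).
Local Notation Vmax := (Om2 + eps * sigma / 2 + 1).

Lemma tilted_energy_lower (x y : R) :
  Rmin Om2 1 / 2 * (x ^ 2 + y ^ 2) <= V x y.
Proof.
  unfold quadV.
  assert (Hxy : - (eps * x * y) <= eps / 2 * x ^ 2 + eps / 2 * y ^ 2).
  { pose proof (Rmult_le_young 1 x (- y) Rlt_0_1). nra. }
  pose proof (Rmin_l Om2 1); pose proof (Rmin_r Om2 1).
  assert (Rmin Om2 1 / 2 * x ^ 2 <= (Om2 + eps * sigma / 2 - eps / 2) * x ^ 2)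
    by (apply Rmult_le_compat_r; [apply pow2_ge_0 | nra]).
  assert (Rmin Om2 1 / 2 * y ^ 2 <= (1 - eps / 2) * y ^ 2)
    by (apply Rmult_le_compat_r; [apply pow2_ge_0 | lra]).
  lra.
Qed.

Lemma tilted_energy_upper (x y : R) : V x y <= Vmax * (x ^ 2 + y ^ 2).
Proof.
  unfold quadV.
  assert (Hxy : eps * x * y <= eps / 2 * x ^ 2 + eps / 2 * y ^ 2).
  { pose proof (Rmult_le_young 1 x y Rlt_0_1). nra. }
  assert (eps / 2 * x ^ 2 <= 1 * x ^ 2)
    by (apply Rmult_le_compat_r; [apply pow2_ge_0 | lra]).
  assert (eps / 2 * y ^ 2 <= (Om2 + eps * sigma / 2) * y ^ 2)
    by (apply Rmult_le_compat_r; [apply pow2_ge_0 | nra]).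
  lra.
Qed.

Lemma tilted_energy_dissipation (x y F M : R) :
  F ^ 2 <= M ->
  let dy := - Om2 * x - sigma * y + F in
  2 * (Om2 + eps * sigma / 2) * x * y + eps * (y * y + x * dy) + 2 * 1 * y * dy
    <= - Rmin (eps * Om2 / 2) (sigma / 2) * (x ^ 2 + y ^ 2)
       + M * (eps / (2 * Om2) + 2 / sigma).
Proof.
  intros HF dy; unfold dy.
  (* The coefficient [Om2 + eps * sigma / 2] of [x ^ 2] is chosen so that the
     [x * y] terms cancel. *)
  replace (2 * (Om2 + eps * sigma / 2) * x * y
           + eps * (y * y + x * (- Om2 * x - sigma * y + F))
           + 2 * 1 * y * (- Om2 * x - sigma * y + F))
    with (- eps * Om2 * x ^ 2 - (2 * sigma - eps) * y ^ 2
          + x * (eps * F) + y * (2 * F)) by field.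
  pose proof (Rmult_le_young (eps * Om2) x (eps * F) ltac:(nra)) as Hx.
  pose proof (Rmult_le_young sigma y (2 * F) Hsigma) as Hy.
  replace ((eps * F) ^ 2 / (2 * (eps * Om2))) with (F ^ 2 * (eps / (2 * Om2)))
    in Hx by (field; lra).
  replace ((2 * F) ^ 2 / (2 * sigma)) with (F ^ 2 * (2 / sigma)) in Hy
    by (field; lra).
  assert (HK : F ^ 2 * (eps / (2 * Om2) + 2 / sigma)
               <= M * (eps / (2 * Om2) + 2 / sigma)).
  { apply Rmult_le_compat_r; [|exact HF].
    pose proof (Rdiv_lt_0_compat eps (2 * Om2) Heps ltac:(lra)).
    pose proof (Rdiv_lt_0_compat 2 sigma ltac:(lra) Hsigma). lra. }
  pose proof (Rmin_l (eps * Om2 / 2) (sigma / 2)).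
  pose proof (Rmin_r (eps * Om2 / 2) (sigma / 2)).
  pose proof (pow2_ge_0 x); pose proof (pow2_ge_0 y).
  nra.
Qed.

Lemma tilted_energy_decay (x y F M : R) :
  F ^ 2 <= M ->
  let dy := - Om2 * x - sigma * y + F in
  2 * (Om2 + eps * sigma / 2) * x * y + eps * (y * y + x * dy) + 2 * 1 * y * dy
    <= - (Rmin (eps * Om2 / 2) (sigma / 2) / Vmax) * V x y
       + M * (eps / (2 * Om2) + 2 / sigma).
Proof.
  intros HF dy.
  pose proof (tilted_energy_dissipation x y F M HF) as Hdiss.
  assert (Hm : 0 < Rmin (eps * Om2 / 2) (sigma / 2))
    by (apply Rmin_glb_lt; nra).
  assert (HVmax : 0 < Vmax) by nra.
  assert (Hrate : Rmin (eps * Om2 / 2) (sigma / 2) / Vmax * V x y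
                  <= Rmin (eps * Om2 / 2) (sigma / 2) * (x ^ 2 + y ^ 2)).
  { replace (Rmin (eps * Om2 / 2) (sigma / 2) * (x ^ 2 + y ^ 2))
      with (Rmin (eps * Om2 / 2) (sigma / 2) / Vmax * (Vmax * (x ^ 2 + y ^ 2)))
      by (field; lra).
    apply Rmult_le_compat_l; [apply Rlt_le, Rdiv_lt_0_compat; lra|].
    apply tilted_energy_upper. }
  simpl in Hdiss; unfold dy; lra.
Qed.

End TiltedEnergy.

Theorem lemma2p1 (Omega sigma c hbar w1 w2 p : R) (Ap : R -> R) :
  0 < Omega -> 0 < sigma -> 0 < c -> 0 < hbar -> w1 < w2 -> 0 < p ->
  cont_on_nonneg Ap ->
  exists (k1 k2 k3 a1 a2 : R),
    0 < a1 /\ 0 < a2 /\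
    (forall x y : R,
        a1 * (x ^ 2 + y ^ 2) <= quadV k1 k2 k3 x y /\
        quadV k1 k2 k3 x y <= a2 * (x ^ 2 + y ^ 2)) /\
    exists (gamma D : R), 0 < gamma /\ 0 < D /\
      forall (A B : R -> R) (C1 C2 : R -> C),
        MB_solution Omega sigma c hbar w1 w2 p Ap A B C1 C2 ->
        (forall t, 0 < t -> Cmod (C1 t) ^ 2 + Cmod (C2 t) ^ 2 = 1) ->
        forall t, 0 < t ->
          Derive (fun s => quadV k1 k2 k3 (A s) (B s)) t
            <= - gamma * quadV k1 k2 k3 (A t) (B t) + D.
Proof.
  (* Neither [hbar] nor the pumping [Ap] enters the equations for [A], [B]. *)
  intros HOmega Hsigma Hc _ Hw Hp _.
  assert (HOm2 : 0 < Omega ^ 2) by nra.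
  set (eps := Rmin sigma (Rmin (Omega ^ 2) 1)).
  assert (Heps : 0 < eps) by (repeat apply Rmin_glb_lt; lra).
  assert (Heps_sigma : eps <= sigma) by apply Rmin_l.
  assert (Heps_Om2 : eps <= Omega ^ 2)
    by (eapply Rle_trans; [apply Rmin_r | apply Rmin_l]).
  assert (Heps1 : eps <= 1) by (eapply Rle_trans; [apply Rmin_r | apply Rmin_r]).
  set (M := (c * qconst w1 w2 p) ^ 2).
  assert (HM : 0 < M)
    by (unfold M, qconst; apply pow_lt, Rmult_lt_0_compat, Rmult_lt_0_compat; lra).
  exists (Omega ^ 2 + eps * sigma / 2), eps, 1,
    (Rmin (Omega ^ 2) 1 / 2), (Omega ^ 2 + eps * sigma / 2 + 1).
  split; [assert (0 < Rmin (Omega ^ 2) 1) by (apply Rmin_glb_lt; lra); lra|].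
  split; [nra|].
  split; [split; [apply tilted_energy_lower | apply tilted_energy_upper]; lra|].
  exists (Rmin (eps * Omega ^ 2 / 2) (sigma / 2) / (Omega ^ 2 + eps * sigma / 2 + 1)),
    (M * (eps / (2 * Omega ^ 2) + 2 / sigma)).
  split; [apply Rdiv_lt_0_compat; [apply Rmin_glb_lt|]; nra|].
  split; [apply Rmult_lt_0_compat; [exact HM|];
          pose proof (Rdiv_lt_0_compat 2 sigma ltac:(lra) Hsigma);
          pose proof (Rdiv_lt_0_compat eps (2 * Omega ^ 2) Heps ltac:(lra)); lra|].
  intros A B C1 C2 Hsol Hnorm t Ht.
  destruct (Hsol t Ht) as [HA [HB _]].
  rewrite (is_derive_unique _ _ _ (is_derive_quadV _ _ _ A B t _ _ HA HB)).
  apply tilted_energy_decay; try lra.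
  unfold M; rewrite !Rpow_mult_distr.
  apply Rmult_le_compat_l; [apply pow2_ge_0|].
  exact (jcur_sqr_le _ _ _ (Hnorm t Ht)).
Qed.
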